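(* Let $a,b,c,n,m,p,q,r$ be positive integers with $n>1$ and $r>1$, and let $$M=\begin{pmatrix} 1 & a & b\\ c & n & m\\ p & q & r\end{pmatrix}.$$ If $\mathrm{Cat}(M)\neq\emptyset$, then $n\geq ac+1$, $r\geq bp+1$, $m\geq bc$ and $q\geq ap$.
   Context: For an $n\times n$ matrix $M=(m_{ij})$ with entries in the natural numbers, $\mathrm{Cat}(M)$ denotes the collection of categories $A$ with exactly $n$ distinct objects $x_1,\dots,x_n$ such that $|A(x_i,x_j)|=m_{ij}$ for all $i,j$, where $A(x_i,x_j)$ is the set of morphisms from $x_i$ to $x_j$. *)

From HB Require Import structures.
From mathcomp Require Import all_boot all_algebra.
Set Implicit Arguments. Unset Strict Implicit. Unset Printing Implicit Defensive.

Record cat_on (n : nat) := CatOn {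
  hom : 'I_n -> 'I_n -> finType;
  idm : forall i, hom i i;
  comp : forall i j k, hom j k -> hom i j -> hom i k;
  comp_id_l : forall i j (f : hom i j), comp (idm j) f = f;
  comp_id_r : forall i j (f : hom i j), comp f (idm i) = f;
  comp_assoc : forall i j k l (h : hom k l) (g : hom j k) (f : hom i j),
      comp h (comp g f) = comp (comp h g) f
}.

Definition in_Cat (n : nat) (M : 'M[nat]_n) (A : cat_on n) : Prop :=
  forall i j : 'I_n, #|hom A i j| = M i j.

Definition Cat_nonempty (n : nat) (M : 'M[nat]_n) : Prop :=
  exists A : cat_on n, in_Cat M A.

Definition mx3 (x00 x01 x02 x10 x11 x12 x20 x21 x22 : nat) : 'M[nat]_3 :=
  \matrix_(i < 3, j < 3)
    nth 0 (nth [::] [:: [:: x00; x01; x02]; [:: x10; x11; x12]; [:: x20; x21; x22]] i) j.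

(* Let x0 be the object with a single endomorphism.  Then g \o f = id for
   every f : x0 -> y and g : y -> x0, so composition through x0 is injective
   on pairs, giving |A(y,x0)| |A(x0,z)| <= |A(y,z)|.  For z = y the identity
   of y is moreover not of the form f \o g: otherwise y would be isomorphic
   to x0 and have a single endomorphism, contradicting |A(y,y)| > 1. *)
From Pilot Require Import Defs.
From mathcomp Require Import all_boot all_algebra.
Import Pilot.Defs.

Section TrivialEndomorphisms.
Context {N : nat} {A : cat_on N} {x : 'I_N}.
Hypothesis card_End_x : #|hom A x x| = 1.

Lemma endo_eq_id (u : hom A x x) : u = idm A x.
Proof.
have /fintype_le1P le1 : #|hom A x x| <= 1 by rewrite card_End_x.
exact: le1.
Qed.

Lemma comp_retract y (f : hom A x y) (g : hom A y x) : comp g f = idm A x.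
Proof. exact: endo_eq_id. Qed.

Lemma comp_through_inj {y z} (f0 : hom A x y) (k0 : hom A z x) :
  injective (fun p : hom A y x * hom A x z => comp p.2 p.1).
Proof.
move=> [g h] [g' h'] /= E.
have Eh : h = h'.
  have := congr1 (fun t => comp t f0) E.
  by rewrite -!comp_assoc !comp_retract !comp_id_r.
have Eg : g = g'.
  have := congr1 (comp k0) E.
  by rewrite !comp_assoc !comp_retract !comp_id_l.
by rewrite Eh Eg.
Qed.

Lemma card_hom_through_le y z :
  0 < #|hom A x y| -> 0 < #|hom A z x| ->
  #|hom A y x| * #|hom A x z| <= #|hom A y z|.
Proof.
move=> /card_gt0P [f0 _] /card_gt0P [k0 _].
by rewrite -card_prod; exact: leq_card (comp_through_inj f0 k0).
Qed.

Lemma card_End_le1_of_section y (f : hom A x y) (g : hom A y x) :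
  comp f g = idm A y -> #|hom A y y| <= 1.
Proof.
move=> fg_id; apply/fintype_le1P => u v.
suff endo_id (w : hom A y y) : w = idm A y by rewrite (endo_id u) (endo_id v).
have -> : w = comp (comp f g) (comp w (comp f g)).
  by rewrite fg_id comp_id_l comp_id_r.
have -> : comp (comp f g) (comp w (comp f g)) = comp f (comp (comp (comp g w) f) g).
  by rewrite !comp_assoc.
by rewrite (endo_eq_id (comp (comp g w) f)) comp_id_l.
Qed.

Lemma card_End_lower y : 1 < #|hom A y y| ->
  #|hom A x y| * #|hom A y x| + 1 <= #|hom A y y|.
Proof.
move=> End_y_gt1.
have no_section (f : hom A x y) (g : hom A y x) : comp f g <> idm A y.
  by move/card_End_le1_of_section; rewrite leqNgt End_y_gt1.
rewrite addn1 -card_prod -card_option.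
apply: (@leq_card _ _ (fun o => if o is Some p then comp p.1 p.2 else idm A y)).
move=> [[f g]|] [[f' g']|] //= E; last 2 first.
- by case: (no_section _ _ E).
- by case: (no_section _ _ (esym E)).
have Ef : f = f'.
  have := congr1 (fun t => comp t f) E.
  by rewrite -!comp_assoc !comp_retract !comp_id_r.
have Eg : g = g'.
  have := congr1 (comp g) E.
  by rewrite !comp_assoc !comp_retract !comp_id_l.
by rewrite Ef Eg.
Qed.

End TrivialEndomorphisms.

Theorem mainTheorem3 (a b c n m p q r : nat) :
  0 < a -> 0 < b -> 0 < c -> 0 < n -> 0 < m -> 0 < p -> 0 < q -> 0 < r ->
  1 < n -> 1 < r ->
  Cat_nonempty (mx3 1 a b c n m p q r) ->
  [/\ a * c + 1 <= n, b * p + 1 <= r, b * c <= m & a * p <= q].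
Proof.
move=> a_gt0 b_gt0 c_gt0 _ _ p_gt0 _ _ n_gt1 r_gt1 [A cardA].
pose x0 := @Ordinal 3 0 isT; pose x1 := @Ordinal 3 1 isT; pose x2 := @Ordinal 3 2 isT.
have h00 := cardA x0 x0; have h01 := cardA x0 x1; have h02 := cardA x0 x2.
have h10 := cardA x1 x0; have h11 := cardA x1 x1; have h12 := cardA x1 x2.
have h20 := cardA x2 x0; have h21 := cardA x2 x1; have h22 := cardA x2 x2.
rewrite /mx3 !mxE /= in h00 h01 h02 h10 h11 h12 h20 h21 h22.
split.
- by have := card_End_lower h00 x1; rewrite h01 h10 h11; apply.
- by have := card_End_lower h00 x2; rewrite h02 h20 h22; apply.
- have := card_hom_through_le h00 x1 x2.
  by rewrite h01 h20 h10 h02 h12 mulnC; apply.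
- have := card_hom_through_le h00 x2 x1.
  by rewrite h02 h10 h20 h01 h21 mulnC; apply.
Qed.
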